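(* Let $G_1,\dots,G_k$ be finite connected graphs and $G=G_1\Box G_2\Box\cdots\Box G_k$ their Cartesian product. Suppose that each distance matrix $D(G_i)$, $i=1,\dots,k$, has constant row sums. Then (a) $n_-(D(G))\ge \sum_{i=1}^k n_-(D(G_i))$, and (b) $n_+(D(G))\ge 1+\sum_{i=1}^k\bigl(n_+(D(G_i))-1\bigr)$.
   Context: For a connected graph $G$ with vertices $v_1,\dots,v_n$, the distance matrix $D(G)$ is the $n\times n$ matrix with $(i,j)$ entry equal to the graph distance $d(v_i,v_j)$. For a real symmetric matrix $M$, $n_+(M)$ and $n_-(M)$ denote the numbers of positive and negative eigenvalues of $M$ counted with multiplicity. The Cartesian product $G_1\Box\cdots\Box G_k$ has vertex set $V(G_1)\times\cdots\times V(G_k)$, with $(x_1,\dots,x_k)$ adjacent to $(y_1,\dots,y_k)$ iff for some $j$, $x_j$ is adjacent to $y_j$ in $G_j$ and $x_i=y_i$ for all $i\neq j$. *)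

From HB Require Import structures.
From mathcomp Require Import all_boot all_order all_algebra.
From mathcomp Require Import polyrcf.
Set Implicit Arguments. Unset Strict Implicit. Unset Printing Implicit Defensive.
Import Order.TTheory GRing.Theory Num.Theory.
Local Open Scope ring_scope.

Definition simple_graph (T : finType) (e : rel T) : Prop :=
  symmetric e /\ irreflexive e.

Definition connected_graph (T : finType) (e : rel T) : Prop :=
  (0 < #|T|)%N /\ forall x y : T, connect e x y.

Definition has_walk (T : finType) (e : rel T) (n : nat) (x y : T) : bool :=
  [exists p : n.-tuple T, path e x p && (last x p == y)].

(* graph distance: least n (< #|T|) such that a walk of length n from x to y
   exists; for connected graphs a shortest walk is a path of length < #|T|. *)
Definition gdist (T : finType) (e : rel T) (x y : T) : nat :=
  \big[minn/#|T|]_(n < #|T| | has_walk e n x y) (n : nat).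

Definition distmx (R : nzRingType) (T : finType) (e : rel T) : 'M[R]_#|T| :=
  \matrix_(i, j) (gdist e (enum_val i) (enum_val j))%:R.

Definition npos (R : rcfType) (n : nat) (M : 'M[R]_n) : nat :=
  (\sum_(x <- rootsR (char_poly M) | (0 < x)%R) mup x (char_poly M))%N.
Definition nneg (R : rcfType) (n : nat) (M : 'M[R]_n) : nat :=
  (\sum_(x <- rootsR (char_poly M) | (x < 0)%R) mup x (char_poly M))%N.

Definition const_row_sums (R : nzRingType) (n : nat) (M : 'M[R]_n) : Prop :=
  exists c : R, forall i, \sum_j M i j = c.

Definition cprod_rel (k : nat) (T : 'I_k -> finType) (e : forall i, rel (T i))
  : rel {dffun forall i : 'I_k, T i} :=
  fun x y => [exists j, e j (x j) (y j) && [forall i, (i != j) ==> (x i == y i)]].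

From HB Require Import structures.
From mathcomp Require Import all_boot all_order all_algebra.
From mathcomp Require Import polyrcf zify.
Set Implicit Arguments. Unset Strict Implicit. Unset Printing Implicit Defensive.
Import Order.TTheory GRing.Theory Num.Theory.

(* Distances in a Cartesian product add up coordinatewise. When D_l = D(G_l)
   has constant row sum rho_l, the all-ones vector is an eigenvector of D_l and
   its orthogonal complement is D_l-invariant; writing B_l for the restriction,
   char D_l = (X - rho_l) char B_l. Pull a vector u orthogonal to the ones back
   along the projection y |-> y_l of the product: D(G) maps it to f_l times the
   pull-back of u D_l, where f_l > 0 is the size of a fibre of the projection.
   These pull-backs and the all-ones vector (eigenvalue c = sum_l f_l rho_l)
   span a D(G)-invariant subspace of dimension 1 + sum_l (n_l - 1), on which the
   characteristic polynomial is (X - c) prod_l char (f_l B_l); so it divides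
   char D(G). Counting negative, resp. positive, roots of both sides, and using
   that scaling by f_l > 0 preserves signs, gives (a) and (b); in (b), c > 0
   unless every rho_l vanishes, and then k >= 1 makes up for the missing 1. *)

(** * Walks and graph distance *)

Section Walks.
Variables (T : finType) (e : rel T).
Implicit Types (x y z : T) (n m : nat).

Lemma has_walkP n x y :
  reflect (exists p, [/\ size p = n, path e x p & last x p = y]) (has_walk e n x y).
Proof.
apply: (iffP existsP) => [[p /andP[pp /eqP lp]]|[p [sp pp lp]]].
  by exists (val p); rewrite size_tuple.
have sp' : size p == n by rewrite sp.
by exists (Tuple sp'); rewrite /= pp lp eqxx.
Qed.

Lemma has_walk0 x y : has_walk e 0 x y = (x == y).
Proof.
apply/has_walkP/eqP => [[p [/size0nil -> _ /= ->]]|->] //.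
by exists [::].
Qed.

Lemma has_walkS n x y :
  has_walk e n.+1 x y <-> exists2 z, e x z & has_walk e n z y.
Proof.
split => [/has_walkP[[|z p] [//= [sp] /andP[exz pp] lp]]|[z exz /has_walkP[p [sp pp lp]]]].
  by exists z => //; apply/has_walkP; exists p.
by apply/has_walkP; exists (z :: p); rewrite /= sp exz pp lp.
Qed.

Lemma has_walk_cat n m x y z :
  has_walk e n x y -> has_walk e m y z -> has_walk e (n + m) x z.
Proof.
move=> /has_walkP[p [sp pp lp]] /has_walkP[q [sq pq lq]].
apply/has_walkP; exists (p ++ q).
by rewrite size_cat cat_path last_cat lp sp sq pp pq.
Qed.

Lemma has_walk_sym n x y : symmetric e -> has_walk e n x y -> has_walk e n y x.
Proof.
move=> se; elim: n x y => [|n IH] x y; first by rewrite !has_walk0 eq_sym.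
case/has_walkS=> z exz /IH wyz; rewrite -addn1; apply: has_walk_cat wyz _.
by apply/has_walkS; exists x; [rewrite se | rewrite has_walk0].
Qed.

Lemma has_walk_shorten n x y : has_walk e n x y ->
  exists2 m, (m < #|T|)%N & (m <= n)%N && has_walk e m x y.
Proof.
case/has_walkP=> p [sp pp <-]; case: (shortenP pp) => p' pp' up' sub_p.
exists (size p').
  by rewrite -ltnS -/(size (x :: p')) -(card_uniqP up') ltnS max_card.
have /andP[_ up1] := up'.
by rewrite -sp uniq_leq_size //=; apply/has_walkP; exists p'.
Qed.

Lemma has_walk_connect x y : connect e x y -> exists n, has_walk e n x y.
Proof.
by case/connectP=> p pp ly; exists (size p); apply/has_walkP; exists p.
Qed.

Lemma geq_bigminn (I : finType) (P : pred I) (F : I -> nat) a i0 :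
  P i0 -> (\big[minn/a]_(i | P i) F i <= F i0)%N.
Proof.
move=> Pi0; have : i0 \in index_enum I by rewrite mem_index_enum.
elim: (index_enum I) => [//|j r IH]; rewrite inE big_cons.
case/orP => [/eqP<-|/IH h]; first by rewrite Pi0 geq_minl.
by case: (P j); rewrite // geq_min h orbT.
Qed.

Lemma leq_bigminn (I : finType) (P : pred I) (F : I -> nat) a b :
  (b <= a)%N -> (forall i, P i -> b <= F i)%N -> (b <= \big[minn/a]_(i | P i) F i)%N.
Proof.
move=> ba bF; apply: (big_ind (fun v => b <= v)%N) => // u v bu bv.
by rewrite leq_min bu bv.
Qed.

Lemma gdist_min n x y : has_walk e n x y -> (gdist e x y <= n)%N.
Proof.
case/has_walk_shorten=> m mT /andP[mn wm]; apply: leq_trans mn.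
exact: (@geq_bigminn _ (fun i : 'I_#|T| => has_walk e i x y) val _ (Ordinal mT)).
Qed.

Lemma has_walk_gdist n x y : has_walk e n x y -> has_walk e (gdist e x y) x y.
Proof.
move=> w; have ex : exists n, has_walk e n x y by exists n.
case: (ex_minnP ex) => m0 wm0 minm0.
suff -> : gdist e x y = m0 by [].
apply/eqP; rewrite eqn_leq gdist_min //=.
apply: leq_bigminn => [|i /minm0 //].
by have [m mT /andP[_ /minm0 m0m]] := has_walk_shorten wm0; rewrite ltnW ?(leq_ltn_trans m0m).
Qed.

Lemma gdist_refl x : gdist e x x = 0%N.
Proof. by apply/eqP; rewrite -leqn0 (@gdist_min 0) ?has_walk0. Qed.

Lemma gdist_sym x y : symmetric e -> connect e x y -> gdist e x y = gdist e y x.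
Proof.
move=> se /has_walk_connect[n w]; have w' := has_walk_sym se w.
have wxy := has_walk_sym se (has_walk_gdist w').
have wyx := has_walk_sym se (has_walk_gdist w).
by apply/eqP; rewrite eqn_leq (gdist_min wxy) (gdist_min wyx).
Qed.

Lemma gdist_edge x z y : e x z -> connect e z y ->
  (gdist e x y <= (gdist e z y).+1)%N.
Proof.
move=> exz /has_walk_connect[n w]; apply: gdist_min; apply/has_walkS.
by exists z => //; apply: has_walk_gdist w.
Qed.

End Walks.

(** * Distance in a Cartesian product *)

Section Update.
Variables (k : nat) (T : 'I_k -> finType).
Local Notation V := {dffun forall i : 'I_k, T i}.

Definition upd (y : V) j (b : T j) : V :=
  @finfun _ (fun i => T i) (@dfwith _ (fun i => T i) (fun i => y i) j b).
Arguments upd y j b : clear implicits.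

Lemma upd_same (y : V) j b : upd y j b j = b.
Proof. by rewrite /upd ffunE dfwith_in. Qed.

Lemma upd_other (y : V) j b i : i != j -> upd y j b i = y i.
Proof. by move=> ij; rewrite /upd ffunE dfwith_out // eq_sym. Qed.

Lemma upd_upd (y : V) j (a b : T j) : upd (upd y j a) j b = upd y j b.
Proof.
apply/ffunP => i; case: (eqVneq i j) => [->|ij]; first by rewrite !upd_same.
by rewrite !upd_other.
Qed.

Lemma upd_eq (y : V) j b : (upd y j b == y) = (y j == b).
Proof.
apply/eqP/eqP => [<-|<-]; first by rewrite upd_same.
apply/ffunP => i; case: (eqVneq i j) => [->|ij]; first by rewrite upd_same.
by rewrite upd_other.
Qed.

End Update.
Arguments upd {k T} y j b.

Section ProductDistance.
Variables (k : nat) (T : 'I_k -> finType) (e : forall i, rel (T i)).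
Arguments e : clear implicits.
Local Notation V := {dffun forall i : 'I_k, T i}.
Local Notation E := (cprod_rel e).

Lemma has_walk_upd j n (a b : T j) (y : V) :
  has_walk (e j) n a b -> has_walk E n (upd y j a) (upd y j b).
Proof.
elim: n a => [|n IH] a; first by rewrite !has_walk0 => /eqP->.
case/has_walkS=> z eaz /IH w; apply/has_walkS; exists (upd y j z) => //.
apply/existsP; exists j; rewrite !upd_same eaz /=; apply/forallP => i.
by apply/implyP => ij; rewrite !upd_other.
Qed.

Hypothesis e_connected : forall j (a b : T j), connect (e j) a b.

Lemma sum_gdist_le_walk n (x y : V) : has_walk E n x y ->
  (\sum_j gdist (e j) (x j) (y j) <= n)%N.
Proof.
elim: n x => [|n IH] x.
  by rewrite has_walk0 => /eqP->; rewrite big1 // => j _; rewrite gdist_refl.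
case/has_walkS=> z /existsP[j /andP[exz /forallP same]] /IH; rewrite -ltnS.
apply: leq_trans; rewrite (bigD1 j) //= [X in (_ <= X.+1)%N](bigD1 j) //= -addSn.
rewrite leq_add ?gdist_edge // leq_eqVlt; apply/orP; left; apply/eqP.
by apply: eq_bigr => i ij; move/implyP: (same i) => /(_ ij) /eqP ->.
Qed.

Definition switch_prefix (x y : V) (m : nat) : V :=
  @finfun _ (fun i => T i) (fun i => if (i < m)%N then y i else x i).

Lemma has_walk_switch_prefix (x y : V) m : (m <= k)%N ->
  has_walk E (\sum_(j < k | (j < m)%N) gdist (e j) (x j) (y j)) x (switch_prefix x y m).
Proof.
elim: m => [|m IH] mk.
  by rewrite big_pred0 // has_walk0; apply/eqP/ffunP => i; rewrite ffunE.
pose jm : 'I_k := Ordinal mk.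
rewrite (bigD1 jm) //= addnC (eq_bigl (fun j : 'I_k => (j < m)%N)); last first.
  by move=> j /=; rewrite ltnS -val_eqE /= andbC ltn_neqAle.
apply: has_walk_cat (IH (ltnW mk)) _.
have -> : switch_prefix x y m = upd (switch_prefix x y m) jm (x jm).
  by apply/esym/eqP; rewrite upd_eq ffunE ltnn.
have -> : switch_prefix x y m.+1 = upd (switch_prefix x y m) jm (y jm).
  apply/ffunP => i; case: (eqVneq i jm) => [->|ij]; first by rewrite upd_same ffunE ltnSn.
  rewrite upd_other // !ffunE ltnS leq_eqVlt.
  by have /negbTE-> : (val i != m) by rewrite -(inj_eq val_inj) in ij.
apply: has_walk_upd; have [n w] := has_walk_connect (e_connected (x jm) (y jm)).
exact: has_walk_gdist w.
Qed.

Lemma gdist_cprod (x y : V) :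
  gdist E x y = (\sum_j gdist (e j) (x j) (y j))%N.
Proof.
have := has_walk_switch_prefix x y (leqnn k).
have -> : switch_prefix x y k = y by apply/ffunP => i; rewrite ffunE ltn_ord.
rewrite (eq_bigl _ _ (@ltn_ord k)) => w.
by apply/eqP; rewrite eqn_leq gdist_min //= sum_gdist_le_walk // (has_walk_gdist w).
Qed.

End ProductDistance.

(** * Counting real roots with multiplicity *)

Local Open Scope ring_scope.

Section RootCount.
Variable R : rcfType.
Implicit Types (P : pred R) (p q : {poly R}).

(* [npos M] and [nneg M] are [nroots P (char_poly M)] for [P := >0], [<0],
   by conversion. *)
Definition nroots P p : nat := (\sum_(x <- rootsR p | P x) mup x p)%N.

Lemma mem_rootsR p x : p != 0 -> (x \in rootsR p) = root p x.
Proof. by move=> pn0; move: (roots_on_rootsR pn0 x); rewrite in_itv. Qed.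

Lemma nrootsE P p (s : seq R) : p != 0 -> uniq s -> (forall x, root p x -> x \in s) ->
  nroots P p = (\sum_(x <- s | P x) mup x p)%N.
Proof.
move=> pn0 us sub; rewrite /nroots (perm_big [seq x <- s | root p x]); last first.
  apply: uniq_perm; rewrite ?uniq_roots ?filter_uniq // => x.
  by rewrite mem_filter mem_rootsR //; case rx: (root p x); rewrite //= sub.
rewrite big_filter_cond (bigID (root p) (fun x => P x)) /=.
rewrite [X in (_ + X)%N]big1 ?addn0; last by move=> x /andP[_ /mupNroot].
by apply: eq_bigl => x; rewrite andbC.
Qed.

Lemma nrootsM P p q : p != 0 -> q != 0 -> nroots P (p * q) = (nroots P p + nroots P q)%N.
Proof.
move=> pn0 qn0; pose s := undup (rootsR p ++ rootsR q).
have us : uniq s := undup_uniq _.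
have sP x : root p x -> x \in s by rewrite mem_undup mem_cat -mem_rootsR // => ->.
have sQ x : root q x -> x \in s by rewrite mem_undup mem_cat orbC -mem_rootsR // => ->.
have sPQ x : root (p * q) x -> x \in s by rewrite rootM => /orP[/sP|/sQ].
rewrite (nrootsE P (mulf_neq0 pn0 qn0) us sPQ) (nrootsE P pn0 us sP).
rewrite (nrootsE P qn0 us sQ) -big_split /=.
by apply: eq_bigr => x _; rewrite mupM.
Qed.

Lemma nroots1 P : nroots P 1 = 0%N.
Proof.
by rewrite (@nrootsE P 1 [::]) ?oner_neq0 ?big_nil // => x; rewrite (negbTE (root1 x)).
Qed.

Lemma nroots_prod P (I : Type) (r : seq I) (F : I -> {poly R}) :
  (forall i, F i != 0) ->
  nroots P (\prod_(i <- r) F i) = (\sum_(i <- r) nroots P (F i))%N.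
Proof.
move=> Fn0; elim: r => [|i r IH]; first by rewrite !big_nil nroots1.
have Frn0 : \prod_(j <- r) F j != 0.
  by apply: (big_ind (fun q => q != 0)) => // [|a b]; [apply: oner_neq0 | apply: mulf_neq0].
by rewrite !big_cons nrootsM // IH.
Qed.

Lemma nroots_dvdp P p q : q != 0 -> p %| q -> (nroots P p <= nroots P q)%N.
Proof.
move=> qn0 /dvdpP[r qE]; move: qn0; rewrite qE mulf_eq0 negb_or => /andP[rn0 pn0].
by rewrite nrootsM // leq_addl.
Qed.

Lemma nroots_XsubC P a : nroots P ('X - a%:P) = P a.
Proof.
rewrite (@nrootsE P _ [:: a]) ?polyXsubC_eq0 // => [|x]; last by rewrite root_XsubC inE.
by rewrite big_cons big_nil -['X - a%:P]expr1 mup_XsubCX eqxx; case: (P a).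
Qed.

Lemma nrootsZ P a p : a != 0 -> nroots P (a *: p) = nroots P p.
Proof.
move=> an0; have [->|pn0] := eqVneq p 0; first by rewrite scaler0.
by rewrite -mul_polyC nrootsM ?polyC_eq0 // /nroots rootsRC big_nil.
Qed.

Lemma comp_scale_neq0 (c : R) p : c != 0 -> p != 0 -> p \Po (c *: 'X) != 0.
Proof. by move=> cn0 pn0; rewrite comp_poly_eq0 // size_scale // size_polyX. Qed.

Lemma mup_comp_scale_le (c : R) x p : c != 0 -> p != 0 ->
  (mup (c * x) p <= mup x (p \Po (c *: 'X)))%N.
Proof.
move=> cn0 pn0; rewrite mup_geq ?comp_scale_neq0 //; set n := mup _ p.
have /dvdpP[r ->] : ('X - (c * x)%:P) ^+ n %| p by rewrite -mup_geq.
rewrite comp_polyM rmorphXn /= comp_polyB comp_polyX comp_polyC.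
by rewrite polyCM -mul_polyC -mulrBr exprMn mulrA dvdp_mull.
Qed.

Lemma mup_comp_scale (c : R) x p : c != 0 -> p != 0 ->
  mup x (p \Po (c *: 'X)) = mup (c * x) p.
Proof.
move=> cn0 pn0; apply/eqP; rewrite eqn_leq mup_comp_scale_le // andbT.
have := mup_comp_scale_le (c * x) (invr_neq0 cn0) (comp_scale_neq0 cn0 pn0).
rewrite -comp_polyA comp_polyZ comp_polyX scalerA mulfV // scale1r comp_polyXr.
by rewrite mulKf.
Qed.

Lemma nroots_comp_scale P (c : R) p : 0 < c -> (forall x, P (c * x) = P x) ->
  nroots P (p \Po (c *: 'X)) = nroots P p.
Proof.
move=> c_gt0 Pc; have cn0 : c != 0 by rewrite gt_eqF.
have [->|pn0] := eqVneq p 0; first by rewrite comp_poly0.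
have cK y : c * (y / c) = y by rewrite mulrC mulfVK.
rewrite (@nrootsE P _ [seq y / c | y <- rootsR p]) ?comp_scale_neq0 //.
- rewrite big_map; apply: eq_big => [y|y _]; first by rewrite -Pc cK.
  by rewrite mup_comp_scale // cK.
- by rewrite map_inj_uniq ?uniq_roots //; apply: mulIf; rewrite invr_neq0.
move=> x; rewrite root_comp hornerZ hornerX => rx.
by apply/mapP; exists (c * x); rewrite ?mem_rootsR // [c * x]mulrC mulfK.
Qed.

End RootCount.

(** * Characteristic polynomials *)

Lemma char_poly_neq0 (R : nzRingType) n (M : 'M[R]_n) : char_poly M != 0.
Proof. exact: monic_neq0 (char_poly_monic M). Qed.

Section CharPoly.
Variable F : fieldType.

Lemma char_poly_castmx m n (eq_mn : m = n) (A : 'M[F]_m) :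
  char_poly (castmx (eq_mn, eq_mn) A) = char_poly A.
Proof. by case: n / eq_mn; rewrite castmx_id. Qed.

Lemma char_poly_scalar1 (a : F) : char_poly (a%:M : 'M_1) = 'X - a%:P.
Proof. by rewrite /char_poly det_mx11 !mxE /= !mulr1n. Qed.

Lemma char_poly_lblock n1 n2 (A : 'M[F]_n1) (C : 'M[F]_(n2, n1)) (B : 'M[F]_n2) :
  char_poly (block_mx A 0 C B) = char_poly A * char_poly B.
Proof.
rewrite /char_poly /char_poly_mx (scalar_mx_block n1 n2) map_block_mx map_mx0.
by rewrite opp_block_mx add_block_mx oppr0 addr0 det_lblock.
Qed.

Lemma char_poly_mxdiag m (p_ : 'I_m -> nat) (B : forall i, 'M[F]_(p_ i)) :
  char_poly (\mxdiag_i B i) = \prod_i char_poly (B i).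
Proof.
elim: m p_ B => [|m IH] p_ B.
  have char0 n (M : 'M[F]_n) : n = 0%N -> char_poly M = 1.
    by move=> n0; subst n; rewrite /char_poly det_mx00.
  by rewrite [RHS]big_ord0 char0 // big_ord0.
rewrite [LHS](congr1 (@char_poly _ _) (mxdiag_recl B)) char_poly_castmx.
by rewrite char_poly_lblock big_ord_recl IH.
Qed.

Lemma char_poly_conj n (V M : 'M[F]_n) : V \in unitmx ->
  char_poly (V *m M *m invmx V) = char_poly M.
Proof.
move=> Vu; rewrite /char_poly /char_poly_mx.
have -> : 'X%:M - map_mx polyC (V *m M *m invmx V) =
   map_mx polyC V *m ('X%:M - map_mx polyC M) *m map_mx polyC (invmx V).
  rewrite mulmxBr mulmxBl !map_mxM; congr (_ - _).
  by rewrite mul_mx_scalar -scalemxAl -map_mxM mulmxV // map_mx1 scalemx1.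
rewrite !det_mulmx !det_map_mx mulrC mulrA -rmorphM /= -det_mulmx mulVmx //.
by rewrite det1 mul1r.
Qed.

Lemma char_poly_dvd_pid s n (D : 'M[F]_n) (A : 'M[F]_s) : (s <= n)%N ->
  pid_mx s *m D = A *m pid_mx s -> char_poly A %| char_poly D.
Proof.
move=> le_sn; move: (subnKC le_sn); move: (n - s)%N => t E; subst n.
rewrite (@pid_mx_row _ t s) -[D]submxK mul_row_block mul_mx_row !mul1mx !mul0mx.
rewrite !addr0 mulmx0 => /eq_row_mx[-> ->].
by rewrite mulmx1 char_poly_lblock dvdp_mulr.
Qed.

Lemma char_poly_dvd_intertwine s n (P : 'M[F]_(s, n)) (D : 'M[F]_n) (A : 'M[F]_s) :
  row_free P -> P *m D = A *m P -> char_poly A %| char_poly D.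
Proof.
(* Conjugating by the extended bases of [P] reduces to [P = pid_mx s]. *)
move=> Pfree PDA; have rkP : \rank P = s by apply/eqP.
set L := col_ebase P; set U := row_ebase P.
have Lu : L \in unitmx by apply: col_ebase_unit.
have Uu : U \in unitmx by apply: row_ebase_unit.
have PE : P = L *m pid_mx s *m U by rewrite -[X in pid_mx X]rkP mulmx_ebase.
have Liu : invmx L \in unitmx by rewrite unitmx_inv.
rewrite -(char_poly_conj D Uu) -(char_poly_conj A Liu) invmxK.
apply: char_poly_dvd_pid; first by rewrite -rkP rank_leq_col.
move: PDA; rewrite PE => /(congr1 (fun M => invmx L *m M *m invmx U)) /=.
by rewrite !mulmxA mulVmx // mul1mx mulmxK // => ->.
Qed.

Lemma char_poly_scale n (B : 'M[F]_n) (c : F) :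
  char_poly (c *: B) \Po (c *: 'X) = c ^+ n *: char_poly B.
Proof.
rewrite /char_poly -det_map_mx.
have -> : map_mx (comp_poly (c *: 'X)) (char_poly_mx (c *: B)) =
          c%:P *: char_poly_mx B.
  apply/matrixP => i j; rewrite !mxE.
  case: eqP => _; rewrite ?mulr1n ?mulr0n comp_polyB ?comp_polyX ?comp_poly0 comp_polyC.
    by rewrite mulrBr -polyCM mul_polyC.
  by rewrite !sub0r mulrN -polyCM.
by rewrite detZ -mul_polyC rmorphXn.
Qed.

End CharPoly.

Lemma nroots_char_scale (R : rcfType) (P : pred R) n (B : 'M[R]_n) (c : R) :
  0 < c -> (forall x, P (c * x) = P x) ->
  nroots P (char_poly (c *: B)) = nroots P (char_poly B).
Proof.
move=> c_gt0 Pc; rewrite -(nroots_comp_scale _ c_gt0 Pc) char_poly_scale nrootsZ //.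
by rewrite expf_neq0 // gt_eqF.
Qed.

Lemma row_base_kermx (F : fieldType) m n (A : 'M[F]_(m, n)) :
  row_base (kermx A) *m A = 0.
Proof. by apply/sub_kermxP; rewrite eq_row_base. Qed.

Lemma rank_kermx_cV (F : fieldType) n (w : 'cV[F]_n) :
  w != 0 -> (1 + \rank (kermx w))%N = n.
Proof.
move=> w_neq0; have rk_w : \rank w = 1%N.
  by apply/eqP; rewrite eqn_leq rank_leq_col lt0n mxrank_eq0 w_neq0.
by rewrite mxrank_ker rk_w add1n subn1 prednK // -rk_w rank_leq_row.
Qed.

Section EigenSplit.
Variables (F : fieldType) (n : nat) (D : 'M[F]_n) (v : 'rV[F]_n) (w : 'cV[F]_n) (rho : F).
Hypotheses (vw_neq0 : v *m w != 0) (vD : v *m D = rho *: v) (Dw : D *m w = rho *: w).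

Lemma row_base_kermx_restrict :
  row_base (kermx w) *m D = restrictmx (kermx w) D *m row_base (kermx w).
Proof.
rewrite mulmxKpV // stablemx_row_base; apply/sub_kermxP.
by rewrite -mulmxA Dw -scalemxAr mulmx_ker scaler0.
Qed.

Lemma char_poly_eigen_split :
  char_poly D = ('X - rho%:P) * char_poly (restrictmx (kermx w) D).
Proof.
(* [D] acts on the rows of [col_mx v K] by [A]; both have degree [n], so the
   divisibility of characteristic polynomials is an equality. *)
set K := row_base (kermx w); set B := restrictmx (kermx w) D.
have Kw : K *m w = 0 := row_base_kermx w.
pose P := col_mx v K; pose A := block_mx (rho%:M : 'M_1) 0 0 B.
have PD : P *m D = A *m P.
  rewrite mul_col_mx mul_block_col !mul0mx addr0 add0r mul_scalar_mx vD.
  by rewrite row_base_kermx_restrict.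
have Pfree : row_free P.
  apply: inj_row_free => u; rewrite -[u]hsubmxK mul_row_col => u0.
  have lu0 : lsubmx u = 0.
    move: (congr1 (mulmx^~ w) u0) => /=.
    rewrite mulmxDl -(mulmxA (rsubmx u)) -(mulmxA (lsubmx u)) Kw mulmx0 addr0 mul0mx.
    rewrite [lsubmx u]mx11_scalar mul_scalar_mx => /eqP.
    by rewrite scaler_eq0 (negbTE vw_neq0) orbF => /eqP->; rewrite raddf0.
  move: u0; rewrite lu0 mul0mx add0r => /eqP.
  by rewrite mulmx_free_eq0 ?row_base_free // => /eqP->; rewrite row_mx0.
have charA : char_poly A = ('X - rho%:P) * char_poly B.
  by rewrite char_poly_lblock char_poly_scalar1.
apply/eqP; rewrite -charA eq_sym -eqp_monic ?char_poly_monic // -dvdp_size_eqp.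
  have w_neq0 : w != 0 by apply: contraNneq vw_neq0 => ->; rewrite mulmx0.
  by rewrite !size_char_poly -[in X in _ == X](rank_kermx_cV w_neq0).
exact: char_poly_dvd_intertwine Pfree PD.
Qed.

End EigenSplit.

(** * Matrices of coordinatewise sums *)

Section Fibres.
Variables (k : nat) (T : 'I_k -> finType).
Local Notation V := {dffun forall i : 'I_k, T i}.

Lemma sum_fibre_eq (R : nmodType) j (G : V -> R) (b b' : T j) :
  (forall y c, G (upd y j c) = G y) ->
  \sum_(y : V | y j == b) G y = \sum_(y : V | y j == b') G y.
Proof.
move=> Ginv; rewrite (reindex_onto (fun y : V => upd y j b) (fun y : V => upd y j b')) /=.
  by apply: eq_big => [y|y _]; rewrite ?Ginv // upd_same eqxx upd_upd upd_eq.
by move=> y /eqP yb; rewrite upd_upd -yb; apply/eqP; rewrite upd_eq.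
Qed.

Lemma sum_factor_coord (R : pzRingType) j (F : T j -> R) (G : V -> R) (b0 : T j) :
  (forall y c, G (upd y j c) = G y) ->
  \sum_(y : V) F (y j) * G y = (\sum_b F b) * \sum_(y : V | y j == b0) G y.
Proof.
move=> Ginv; rewrite (partition_big (fun y : V => y j) predT) //= mulr_suml.
apply: eq_bigr => b _; rewrite -(sum_fibre_eq b b0 Ginv) mulr_sumr.
by apply: eq_bigr => y /eqP <-.
Qed.

Lemma sum_coord (R : pzRingType) j (F : T j -> R) (b0 : T j) :
  \sum_(y : V) F (y j) = (\sum_b F b) * \sum_(y : V | y j == b0) 1.
Proof.
rewrite -(sum_factor_coord F b0 (G := fun _ => 1)) //.
by apply: eq_bigr => y _; rewrite mulr1.
Qed.

End Fibres.

(* [distmx R e] is [fun_mx (fun a b => (gdist e a b)%:R)] by conversion. *)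
Definition fun_mx (R : Type) (T : finType) (f : T -> T -> R) : 'M[R]_#|T| :=
  \matrix_(i, j) f (enum_val i) (enum_val j).

Definition cprod_fun (R : nmodType) (k : nat) (T : 'I_k -> finType)
    (d : forall l, T l -> T l -> R) (x y : {dffun forall l : 'I_k, T l}) : R :=
  \sum_l d l (x l) (y l).

Local Notation ones_col n := (const_mx 1 : 'cV_n).
Local Notation ones_row n := (const_mx 1 : 'rV_n).

Section FunMatrix.
Variables (R : pzRingType) (T : finType).
Implicit Type f : T -> T -> R.

Lemma big_ord_enum_rank (F : 'I_#|T| -> R) :
  \sum_(i < #|T|) F i = \sum_(a : T) F (enum_rank a).
Proof. by rewrite (reindex (@enum_rank T)) //; apply: onW_bij (@enum_rank_bij T). Qed.

Lemma mulmx_fun_mxE m (U : 'M[R]_(m, #|T|)) f i b :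
  (U *m fun_mx f) i (enum_rank b) = \sum_a U i (enum_rank a) * f a b.
Proof. by rewrite mxE big_ord_enum_rank; apply: eq_bigr => a _; rewrite mxE !enum_rankK. Qed.

Lemma sum_row_orth_const m (U : 'M[R]_(m, #|T|)) i :
  U *m ones_col #|T| = 0 -> \sum_a U i (enum_rank a) = 0.
Proof.
move/(congr1 (fun M : 'M_(m, 1) => M i 0)); rewrite !mxE => U1.
by rewrite -[RHS]U1 big_ord_enum_rank; apply: eq_bigr => a _; rewrite mxE mulr1.
Qed.

Lemma fun_mx_mul_const f r : (forall a, \sum_b f a b = r) ->
  fun_mx f *m ones_col #|T| = r *: ones_col #|T|.
Proof.
move=> f_row; apply/matrixP => i j; rewrite !mxE mulr1 -(f_row (enum_val i)).
by rewrite big_ord_enum_rank; apply: eq_bigr => b _; rewrite !mxE !enum_rankK mulr1.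
Qed.

Lemma const_mul_fun_mx f r : (forall b, \sum_a f a b = r) ->
  ones_row #|T| *m fun_mx f = r *: ones_row #|T|.
Proof.
move=> f_col; apply/matrixP => i j; rewrite -[j]enum_valK mulmx_fun_mxE !mxE mulr1.
by rewrite -(f_col (enum_val j)); apply: eq_bigr => a _; rewrite mxE mul1r.
Qed.

End FunMatrix.

Lemma const_row_sums_fun_mx (R : nzRingType) (T : finType) (f : T -> T -> R) :
  const_row_sums (fun_mx f) -> forall a a', \sum_b f a b = \sum_b f a' b.
Proof.
have rowE a : \sum_b f a b = \sum_j fun_mx f (enum_rank a) j.
  by rewrite big_ord_enum_rank; apply: eq_bigr => b _; rewrite mxE !enum_rankK.
by case=> r f_row a a'; rewrite !rowE !f_row.
Qed.

Section CprodMatrix.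
Variables (R : numFieldType) (k : nat) (T : 'I_k -> finType).
Variable d : forall l, T l -> T l -> R.
Arguments d : clear implicits.
Local Notation V := {dffun forall l : 'I_k, T l}.
Variables (y0 : V) (rho : 'I_k -> R).
Hypothesis d_sym : forall l a b, d l a b = d l b a.
Hypothesis d_row : forall l a, \sum_b d l a b = rho l.
Local Notation DG := (fun_mx (cprod_fun d)).

Definition fibre_size l : R := \sum_(y : V | y l == y0 l) 1.
Definition rho_cprod : R := \sum_l rho l * fibre_size l.
Definition lift_mx l : 'M[R]_(#|T l|, #|V|) :=
  \matrix_(a, q) ((enum_val q : V) l == enum_val a)%:R.
Definition orth_part l : 'M[R]_(\rank (kermx (ones_col #|T l|))) :=
  restrictmx (kermx (ones_col #|T l|)) (fun_mx (d l)).

Lemma fibre_size_gt0 l : 0 < fibre_size l.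
Proof.
rewrite /fibre_size (bigD1 y0) //= ltr_pwDl ?ltr01 //.
by apply: sumr_ge0 => y _; apply: ler01.
Qed.

Lemma mulmx_lift_mxE m l (U : 'M[R]_(m, #|T l|)) i (y : V) :
  (U *m lift_mx l) i (enum_rank y) = U i (enum_rank (y l)).
Proof.
rewrite mxE (bigD1 (enum_rank (y l))) //= mxE !enum_rankK eqxx mulr1.
rewrite big1 ?addr0 // => a ne; rewrite mxE enum_rankK.
by case: eqP => [ya|_]; [case/eqP: ne; rewrite ya enum_valK | rewrite mulr0].
Qed.

Lemma lift_mx_cprod l m (U : 'M[R]_(m, #|T l|)) : U *m ones_col _ = 0 ->
  U *m lift_mx l *m DG = fibre_size l *: (U *m fun_mx (d l) *m lift_mx l).
Proof.
move=> U1; apply/matrixP => i q; rewrite -[q]enum_valK; set x := enum_val q.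
rewrite mulmx_fun_mxE mxE mulmx_lift_mxE mulmx_fun_mxE.
under eq_bigr do rewrite mulmx_lift_mxE /cprod_fun mulr_sumr.
rewrite exchange_big (bigD1 l) //= [X in _ + X]big1 ?addr0 => [|j jl].
  move: (sum_coord (fun b => U i (enum_rank b) * d l b (x l)) (y0 l)) => /= ->.
  by rewrite mulrC.
(* Coordinates [j != l] contribute multiples of a row sum of [U], which is 0. *)
have Ginv (y : V) c : d j (upd y l c j) (x j) = d j (y j) (x j) by rewrite upd_other.
move: (sum_factor_coord (fun b => U i (enum_rank b)) (y0 l) Ginv) => /= ->.
by rewrite sum_row_orth_const // mul0r.
Qed.

Lemma const_mul_cprod : ones_row #|V| *m DG = rho_cprod *: ones_row #|V|.
Proof.
apply: const_mul_fun_mx => y; rewrite exchange_big; apply: eq_bigr => l _.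
move: (sum_coord (fun b => d l b (y l)) (y0 l)) => /= ->; rewrite -(d_row (y l)).
by congr (_ * _); apply: eq_bigr => b _; rewrite d_sym.
Qed.

Lemma lift_mx_indep (a : R) (u : forall l, 'rV[R]_#|T l|) :
  (forall l, u l *m ones_col _ = 0) ->
  a *: ones_row #|V| + \sum_l u l *m lift_mx l = 0 -> a = 0 /\ forall l, u l = 0.
Proof.
(* Moving [y] along coordinate [l] shows that [u l] is constant, hence [0] since
   it is orthogonal to the ones. *)
move=> u1 u0.
have u0_at (y : V) : a + \sum_l u l 0 (enum_rank (y l)) = 0.
  have := congr1 (fun M : 'rV_#|V| => M 0 (enum_rank y)) u0.
  rewrite mxE summxE !mxE mulr1 => h; rewrite -[RHS]h; congr (_ + _).
  by apply: eq_bigr => l _; rewrite mulmx_lift_mxE.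
have u_const l b : u l 0 (enum_rank b) = u l 0 (enum_rank (y0 l)).
  have := etrans (u0_at (upd y0 l b)) (esym (u0_at y0)).
  rewrite (bigD1 l) //= [in RHS](bigD1 l) //=.
  rewrite upd_same (eq_bigr (fun j => u j 0 (enum_rank (y0 j)))) => [/addrI/addIr //|j jl].
  by rewrite upd_other.
have ul0 l : u l = 0.
  have := sum_row_orth_const 0 (u1 l); under eq_bigr do rewrite u_const.
  rewrite sumr_const -mulr_natr => /eqP; rewrite mulf_eq0 pnatr_eq0 eqn0Ngt.
  have -> : (0 < #|T l|)%N by apply/card_gt0P; exists (y0 l).
  rewrite orbF => /eqP ul0; apply/matrixP => i b.
  by rewrite ord1 -[b]enum_valK u_const ul0 mxE.
split=> //; have := u0_at y0.
by rewrite big1 ?addr0 // => l _; rewrite ul0 mxE.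
Qed.

Definition lift_basis :=
  col_mx (ones_row #|V|) (\mxcol_l (row_base (kermx (ones_col #|T l|)) *m lift_mx l)).
Definition lift_block :=
  block_mx (rho_cprod%:M : 'M_1) 0 0 (\mxdiag_l (fibre_size l *: orth_part l)).

Lemma lift_basis_free : row_free lift_basis.
Proof.
apply: inj_row_free => v; rewrite -[v]hsubmxK mul_row_col -[rsubmx v]submxrowK.
rewrite mul_mxrow_mxcol [lsubmx v]mx11_scalar mul_scalar_mx => v0.
pose u l := submxrow (rsubmx v) l *m row_base (kermx (ones_col #|T l|)).
have [-> u0] : lsubmx v 0 0 = 0 /\ forall l, u l = 0.
  apply: lift_mx_indep => [l|]; first by rewrite -mulmxA row_base_kermx mulmx0.
  by rewrite -[RHS]v0; congr (_ + _); apply: eq_bigr => l _; rewrite mulmxA.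
have w0 l : submxrow (rsubmx v) l = 0.
  by apply/eqP; rewrite -(mulmx_free_eq0 _ (row_base_free _)) -/(u l) u0.
by rewrite raddf0 (eq_mxrow w0) mxrow0 row_mx0.
Qed.

Lemma lift_basis_stable : lift_basis *m DG = lift_block *m lift_basis.
Proof.
rewrite mul_col_mx mul_block_col !mul0mx addr0 add0r mul_scalar_mx const_mul_cprod.
rewrite mxcol_mul mul_mxdiag_mxcol; congr col_mx; apply: eq_mxcol => l.
rewrite mulmxA lift_mx_cprod ?row_base_kermx //.
by rewrite (row_base_kermx_restrict (fun_mx_mul_const (@d_row l))) -!scalemxAl.
Qed.

Theorem char_poly_cprod_dvd :
  ('X - rho_cprod%:P) * \prod_l char_poly (fibre_size l *: orth_part l) %| char_poly DG.
Proof.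
have := char_poly_dvd_intertwine lift_basis_free lift_basis_stable.
by rewrite char_poly_lblock char_poly_scalar1 char_poly_mxdiag.
Qed.

End CprodMatrix.

(** * Inertia of the product *)

(* The arithmetic of part (b), with [a := 0 < c], [b j := 0 < rho_j] and [q j]
   the number of positive eigenvalues of [B_j]. *)
Lemma add1_sum_pred_le k (a : bool) (b : 'I_k -> bool) (q : 'I_k -> nat) (N : nat) :
  (0 < k)%N -> (forall j, b j -> a) -> (a + \sum_j q j <= N)%N ->
  1 + \sum_j ((b j + q j)%:Z - 1) <= N%:Z.
Proof.
move=> k_gt0 ba aqN; have natZ := big_morph Posz PoszD (erefl 0%:Z).
case: a ba aqN => [_|nb] aqN.
  apply: le_trans (_ : 1 + \sum_j (q j)%:Z <= _); last by rewrite -natZ -PoszD lez_nat.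
  by rewrite lerD2l ler_sum // => j _; rewrite PoszD lerBlDl lerD2r lez_nat leq_b1.
have /= sq := leq_trans (leq_addl _ _) aqN.
rewrite sumrB sumr_const card_ord (eq_bigr (fun j => (q j)%:Z)) => [|j _]; last first.
  by case: (b j) (nb j) => // /(_ isT).
rewrite -natZ; lia.
Qed.

Lemma ones_mul_ones_neq0 (R : numFieldType) n :
  (0 < n)%N -> ones_row n *m ones_col n != 0 :> 'M[R]_1.
Proof.
move=> n_gt0; apply/negP => /eqP/matrixP/(_ 0 0); rewrite !mxE.
rewrite (eq_bigr (fun _ => 1)) => [|j _]; last by rewrite !mxE mulr1.
by rewrite sumr_const card_ord => /eqP; rewrite pnatr_eq0 eqn0Ngt n_gt0.
Qed.

Section CprodInertia.
Variables (R : rcfType) (k : nat) (T : 'I_k -> finType).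
Variable d : forall l, T l -> T l -> R.
Arguments d : clear implicits.
Local Notation V := {dffun forall l : 'I_k, T l}.
Variable y0 : V.
Hypothesis d_sym : forall l a b, d l a b = d l b a.
Hypothesis d_ge0 : forall l a b, 0 <= d l a b.
Hypothesis d_row_const : forall l, const_row_sums (fun_mx (d l)).
Local Notation DG := (fun_mx (cprod_fun d)).

Let rho l := \sum_b d l (y0 l) b.

Let d_row l a : \sum_b d l a b = rho l.
Proof. exact: const_row_sums_fun_mx. Qed.

Let rho_ge0 l : 0 <= rho l.
Proof. by apply: sumr_ge0 => b _. Qed.

Let rho_cprod_ge0 : 0 <= rho_cprod y0 rho.
Proof. by apply: sumr_ge0 => l _; rewrite mulr_ge0 // ltW ?fibre_size_gt0. Qed.

Let rho_cprod_gt0 l : 0 < rho l -> 0 < rho_cprod y0 rho.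
Proof.
move=> rho_gt0; rewrite /rho_cprod (bigD1 l) //= ltr_pwDl ?mulr_gt0 ?fibre_size_gt0 //.
by apply: sumr_ge0 => j _; rewrite mulr_ge0 // ltW ?fibre_size_gt0.
Qed.

Lemma nroots_fun_mx (P : pred R) l :
  nroots P (char_poly (fun_mx (d l))) = (P (rho l) + nroots P (char_poly (orth_part d l)))%N.
Proof.
have n_gt0 : (0 < #|T l|)%N by apply/card_gt0P; exists (y0 l).
have vw_neq0 := ones_mul_ones_neq0 R n_gt0.
rewrite (char_poly_eigen_split (D := fun_mx (d l)) (rho := rho l) vw_neq0).
- by rewrite nrootsM ?polyXsubC_eq0 ?char_poly_neq0 // nroots_XsubC.
- by apply: const_mul_fun_mx => b; rewrite -(d_row b); apply: eq_bigr => a _.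
exact: fun_mx_mul_const.
Qed.

Lemma nroots_cprod (P : pred R) : (forall c x, 0 < c -> P (c * x) = P x) ->
  (P (rho_cprod y0 rho) + \sum_l nroots P (char_poly (orth_part d l))
    <= nroots P (char_poly DG))%N.
Proof.
move=> P_scale.
have := nroots_dvdp P (char_poly_neq0 _) (char_poly_cprod_dvd y0 d_sym d_row).
have prod_neq0 : \prod_l char_poly (fibre_size R y0 l *: orth_part d l) != 0.
  by apply/prodf_neq0 => l _; apply: char_poly_neq0.
rewrite nrootsM ?polyXsubC_eq0 // nroots_XsubC nroots_prod => [dvd|l]; last first.
  exact: char_poly_neq0.
apply: leq_trans _ dvd; rewrite leq_add2l; apply/eq_leq/eq_bigr => l _.
by rewrite [RHS]nroots_char_scale ?fibre_size_gt0 // => x; rewrite P_scale ?fibre_size_gt0.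
Qed.

Lemma nneg_cprod : (\sum_l nneg (fun_mx (d l)) <= nneg DG)%N.
Proof.
have := nroots_cprod (P := fun x => x < 0) (fun c x c_gt0 => pmulr_rlt0 x c_gt0).
rewrite ltNge rho_cprod_ge0 add0n => le_sum; apply: leq_trans _ le_sum.
apply/eq_leq/eq_bigr => l _.
by have := nroots_fun_mx (fun x => x < 0) l; rewrite ltNge rho_ge0; apply.
Qed.

Lemma npos_cprod : (0 < k)%N ->
  1 + \sum_l ((npos (fun_mx (d l)))%:Z - 1) <= (npos DG)%:Z.
Proof.
move=> k_gt0; have nposE l : npos (fun_mx (d l)) =
    ((0 < rho l)%R + nroots (fun x => (0 < x)%R) (char_poly (orth_part d l)))%N.
  exact: nroots_fun_mx.
under eq_bigr do rewrite nposE.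
apply: (add1_sum_pred_le (a := (0 < rho_cprod y0 rho)%R) k_gt0 rho_cprod_gt0).
exact: nroots_cprod (fun c x c_gt0 => pmulr_rgt0 x c_gt0).
Qed.

End CprodInertia.

Lemma distmx_cprod (R : nzRingType) k (T : 'I_k -> finType) (e : forall i, rel (T i)) :
  (forall j (a b : T j), connect (e j) a b) ->
  distmx R (cprod_rel e) = fun_mx (cprod_fun (fun l a b => (gdist (e l) a b)%:R)).
Proof. by move=> e_conn; apply/matrixP => p q; rewrite !mxE gdist_cprod // natr_sum. Qed.

Theorem lemma4 (R : rcfType) (k : nat) (T : 'I_k -> finType)
  (e : forall i, rel (T i)) :
  (0 < k)%N ->
  (forall i, simple_graph (e i)) ->
  (forall i, connected_graph (e i)) ->
  (forall i, const_row_sums (distmx R (e i))) ->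
  (\sum_(i < k) nneg (distmx R (e i)) <= nneg (distmx R (cprod_rel e)))%N /\
  (1 + \sum_(i < k) ((npos (distmx R (e i)))%:Z - 1)
     <= (npos (distmx R (cprod_rel e)))%:Z).
Proof.
move=> k_gt0 e_simple e_conn e_rows.
have conn j : forall a b : T j, connect (e j) a b := (e_conn j).2.
pose y0 := @finfun _ (fun i => T i) (fun i => enum_val (Ordinal (e_conn i).1)).
have dist_sym j (a b : T j) : (gdist (e j) a b)%:R = (gdist (e j) b a)%:R :> R.
  by rewrite gdist_sym ?conn //; case: (e_simple j).
have dist_ge0 j (a b : T j) : 0 <= (gdist (e j) a b)%:R :> R by apply: ler0n.
rewrite distmx_cprod //; split; first exact: (nneg_cprod y0 dist_sym dist_ge0 e_rows).
exact: (npos_cprod y0 dist_sym dist_ge0 e_rows).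
Qed.
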